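(* Let $\varPhi$ be a family of open intervals contained in $[0,1]$. Suppose there is $C>0$ such that for every interval $(a,b)\subset[0,1]$ there exists $\varDelta(a,b)\in\varPhi$ with (a) $\frac{a+b}{2}\in\varDelta(a,b)$, (b) $\varDelta(a,b)\subset(a,b)$, (c) $\frac{b-a}{|\varDelta(a,b)|}\le C$. Then $\varPhi$ is faithful for packing dimension calculation, i.e. $\dim_{P}(E,\varPhi)=\dim_{P(\mathit{unc})}(E)$ for every $E\subset[0,1]$.
   Context: Work in $\mathbb R$ with the usual metric; $|A|$ is the length (diameter). An uncentered $\varepsilon$-packing of $E$ is a finite or countable family of pairwise disjoint open intervals $E_i$ with $|E_i|\le\varepsilon$ and $E_i\cap E\ne\varnothing$. For $\alpha\ge0$: $\mathcal P^\alpha_{\varepsilon(\mathit{unc})}(E)=\sup\sum_i|E_i|^\alpha$ over uncentered $\varepsilon$-packings; $\mathcal P^\alpha_{0(\mathit{unc})}=\lim_{\varepsilon\to0}\mathcal P^\alpha_{\varepsilon(\mathit{unc})}$; $\mathcal P^\alpha_{(\mathit{unc})}(E)=\inf\{\sum_j\mathcal P^\alpha_{0(\mathit{unc})}(E_j):E\subset\bigcup_jE_j\}$ over countable covers; $\dim_{P(\mathit{unc})}(E)=\inf\{\alpha:\mathcal P^\alpha_{(\mathit{unc})}(E)=0\}$. $\dim_P(E,\varPhi)$ is defined identically but using only uncentered packings by intervals from $\varPhi$ (empty packing gives $0$). *)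

From HB Require Import structures.
From mathcomp Require Import all_boot all_order all_algebra.
From mathcomp Require Import all_classical all_reals all_analysis.
Set Implicit Arguments. Unset Strict Implicit. Unset Printing Implicit Defensive.
Import Order.TTheory GRing.Theory Num.Theory.
Import numFieldNormedType.Exports.
Local Open Scope classical_set_scope.
Local Open Scope ring_scope.

(* A (finite or countable) family of intervals is a sequence
   nat -> option (R*R); None entries are "absent" (this encodes finite
   families, including the empty one). *)

Definition open_itv {R : realType} (I : R * R) : set R :=
  [set x | I.1 < x < I.2].

Definition unc_packing {R : realType} (Phi : set (R * R)) (E : set R)
  (eps : R) (P : nat -> option (R * R)) : Prop :=
  (forall i I, P i = Some I ->
     [/\ Phi I, I.1 < I.2, I.2 - I.1 <= eps & open_itv I `&` E !=set0]) /\
  (forall i j I J, i <> j -> P i = Some I -> P j = Some J ->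
     open_itv I `&` open_itv J = set0).

Definition packing_sum {R : realType} (alpha : R) (P : nat -> option (R * R))
  : \bar R :=
  (\sum_(0 <= i <oo)
     (match P i with Some K => ((K.2 - K.1) `^ alpha)%:E | None => 0%E end))%E.

Definition Peps {R : realType} (Phi : set (R * R)) (alpha eps : R)
  (E : set R) : \bar R :=
  ereal_sup [set packing_sum alpha P | P in unc_packing Phi E eps].

Definition P0 {R : realType} (Phi : set (R * R)) (alpha : R) (E : set R)
  : \bar R :=
  lim (Peps Phi alpha ^~ E @ 0^'+).

Definition Pmeas {R : realType} (Phi : set (R * R)) (alpha : R) (E : set R)
  : \bar R :=
  ereal_inf [set (\sum_(0 <= j <oo) P0 Phi alpha (F j))%E
            | F in [set F : nat -> set R | E `<=` \bigcup_j F j]].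

Definition dimP {R : realType} (Phi : set (R * R)) (E : set R) : \bar R :=
  ereal_inf [set alpha%:E | alpha in [set alpha : R | 0 <= alpha /\
                                          Pmeas Phi alpha E = 0%E]].

Definition all_itvs {R : realType} : set (R * R) := setT.
Definition dimP_unc {R : realType} (E : set R) : \bar R := dimP all_itvs E.

From HB Require Import structures.
From mathcomp Require Import all_boot all_order all_algebra.
From mathcomp Require Import all_classical all_reals all_analysis.
From mathcomp Require Import ring lra.
Set Implicit Arguments.
Unset Strict Implicit.
Unset Printing Implicit Defensive.
Import Order.TTheory GRing.Theory Num.Theory.
Local Open Scope classical_set_scope.
Local Open Scope ring_scope.

(* If P^a_0(G) with respect to Phi is finite, the Phi-packings of G at some
   scale e have total a-mass at most L. Fix h <= e/2. The intervals
   Delta(p - h, p + h) around a maximal 2h-separated family of points p of G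
   form such a packing by intervals of length at least 2h/C, so the family has
   at most L (C/2h)^a points; together with 0 and 1 they are 2h-dense in G.
   A packing of G by arbitrary intervals of length in (h/2, h] then has at
   most 12 members near each of these points, so its b-th power sum is
   O(h^(b-a)). Summing over the dyadic scales h = 2^-n, n >= n0, leaves a
   geometric tail, hence P^b_0(G) = 0 for every b > a without restricting to
   Phi. Countable covers carry this over to the packing measures; the other
   inequality holds because restricting the family only lowers the measures. *)

Section packing_measures.
Variable R : realType.
Implicit Types (Phi : set (R * R)) (E : set R) (alpha eps : R).
Local Open Scope ereal_scope.

Definition len_pow alpha (o : option (R * R)) : R :=
  if o is Some K then (K.2 - K.1) `^ alpha else 0.

Lemma len_pow_ge0 alpha o : (0 <= len_pow alpha o)%R.
Proof. by case: o => // K; rewrite powR_ge0. Qed.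

Lemma packing_sumE alpha P :
  packing_sum alpha P = \sum_(0 <= i <oo) (len_pow alpha (P i))%:E.
Proof. by apply: eq_eseriesr => i _; case: (P i). Qed.

Lemma packing_sum_ge alpha (l : R) P (k : nat) : (0 <= alpha)%R -> (0 <= l)%R ->
  (forall i, (i < k)%N -> exists2 I, P i = Some I & (l <= I.2 - I.1)%R) ->
  (k%:R * l `^ alpha)%:E <= packing_sum alpha P.
Proof.
move=> a0 l0 Plen; rewrite packing_sumE.
apply: le_trans (nneseries_lim_ge k _); last by move=> n _ _; rewrite lee_fin len_pow_ge0.
rewrite (_ : (k%:R * _ = \sum_(0 <= i < k) l `^ alpha)%R); last first.
  by rewrite sumr_const_nat subn0 mulr_natl.
rewrite -sumEFin big_nat_cond [X in _ <= X]big_nat_cond.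
apply: lee_sum => i /andP[/andP[_ ik] _].
have [I -> lI] := Plen i ik; rewrite lee_fin /=.
by apply: ge0_ler_powR => //; rewrite nnegrE // (le_trans l0 lI).
Qed.

Lemma Peps_ge0 Phi alpha eps E : 0 <= Peps Phi alpha eps E.
Proof.
apply: le_ereal_sup_tmp; exists 0 => //; exists (fun=> None) => //.
by rewrite /packing_sum eseries0.
Qed.

Lemma le_Peps Phi Phi' alpha eps eps' E E' :
  Phi `<=` Phi' -> E `<=` E' -> (eps <= eps')%R ->
  Peps Phi alpha eps E <= Peps Phi' alpha eps' E'.
Proof.
move=> sPhi sE le_eps; apply/ereal_supP => _ [P [Psub Pdisj] <-].
apply: le_ereal_sup_tmp; exists (packing_sum alpha P) => //; exists P => //.
split => // i I /Psub [PhiI ltI lenI [x [Ix Ex]]]; split => //.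
- exact: sPhi.
- exact: le_trans le_eps.
- by exists x; split => //; exact: sE.
Qed.

Lemma P0_infE Phi alpha E :
  P0 Phi alpha E = ereal_inf [set Peps Phi alpha e E | e in [set e : R | (0 < e)%R]].
Proof.
rewrite /P0; apply: cvg_lim => //.
have -> : [set Peps Phi alpha e E | e in [set e : R | (0 < e)%R]] =
   Peps Phi alpha ^~ E @` [set` Interval (BRight 0%R) (BInfty _ false)].
  by congr image; apply/seteqP; split => x /=; rewrite in_itv/= andbT.
apply: nondecreasing_at_right_cvge => // x y _ _ xy.
exact: le_Peps.
Qed.

Lemma P0_ge0 Phi alpha E : 0 <= P0 Phi alpha E.
Proof. by rewrite P0_infE; apply/ereal_infP => _ [e _ <-]; exact: Peps_ge0. Qed.

Lemma le_P0 Phi Phi' alpha E E' : Phi `<=` Phi' -> E `<=` E' ->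
  P0 Phi alpha E <= P0 Phi' alpha E'.
Proof.
move=> sPhi sE; rewrite !P0_infE; apply/ereal_infP => _ [e e0 <-].
by apply: ge_ereal_inf; exists (Peps Phi alpha e E); [exists e | exact: le_Peps].
Qed.

Lemma Pmeas_ge0 Phi alpha E : 0 <= Pmeas Phi alpha E.
Proof.
by apply/ereal_infP => _ [F _ <-]; apply: nneseries_ge0 => n _ _; exact: P0_ge0.
Qed.

Lemma le_Pmeas Phi Phi' alpha E : Phi `<=` Phi' ->
  Pmeas Phi alpha E <= Pmeas Phi' alpha E.
Proof.
move=> sPhi; apply/ereal_infP => _ [F EF <-].
apply: ge_ereal_inf; exists (\sum_(0 <= j <oo) P0 Phi alpha (F j)); first by exists F.
by apply: lee_nneseries => n *; [exact: P0_ge0 | exact: le_P0].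
Qed.

Lemma le_dimP_family Phi Phi' E : Phi `<=` Phi' -> dimP Phi E <= dimP Phi' E.
Proof.
move=> sPhi; apply/ereal_infP => _ [a [a0 Pa] <-]; apply: ge_ereal_inf.
exists a%:E; last exact: lexx.
exists a; last by [].
split; first exact: a0.
by apply/eqP; rewrite eq_le Pmeas_ge0 andbT -Pa le_Pmeas.
Qed.

Lemma le_dimP_of_Pmeas_eq0 Phi Phi' E :
  (forall a b : R, (0 <= a)%R -> (a < b)%R -> Pmeas Phi a E = 0 -> Pmeas Phi' b E = 0) ->
  dimP Phi' E <= dimP Phi E.
Proof.
move=> PhiPhi'; apply/ereal_infP => _ [a [a0 Pa] <-].
apply/lee_addgt0Pr => e e0; rewrite -EFinD; apply: ereal_inf_lbound.
exists (a + e)%R; last by [].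
split; first by rewrite addr_ge0 // ltW.
by apply: PhiPhi' Pa => //; rewrite ltrDl.
Qed.

End packing_measures.

Lemma sum_nat_partition (V : nmodType) (N m M : nat) (T : pred nat)
    (s : nat -> nat) (f : nat -> V) :
  (forall i, (i < N)%N -> T i -> (m <= s i < M)%N) ->
  \sum_(0 <= i < N | T i) f i =
  \sum_(m <= j < M) \sum_(0 <= i < N | T i && (s i == j)) f i.
Proof.
move=> sT; under [X in _ = X]eq_bigr => j _ do rewrite big_mkcondr.
rewrite exchange_big_nat [LHS]big_nat_cond [RHS]big_nat_cond.
apply: eq_bigr => i /andP[/andP[_ iN] Ti] /=.
rewrite (bigD1_seq (s i)) ?mem_index_iota ?sT ?iota_uniq //= eqxx big1 ?addr0 //.
by move=> j /negbTE; rewrite eq_sym => ->.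
Qed.

Section counting_intervals.
Variable R : realType.

Lemma disjoint_open_itv_sep (I J : R * R) : I.1 < I.2 -> J.1 < J.2 ->
  open_itv I `&` open_itv J = set0 -> I.2 <= J.1 \/ J.2 <= I.1.
Proof.
move=> ltI ltJ IJ0; case: (leP I.2 J.1) => [|JI]; [by left | right].
rewrite leNgt; apply/negP => IJ.
have lt_mM : Num.max I.1 J.1 < Num.min I.2 J.2 by rewrite gt_max !lt_min ltI ltJ IJ JI.
pose x := (Num.max I.1 J.1 + Num.min I.2 J.2) / 2.
have [mI mJ] : I.1 <= Num.max I.1 J.1 /\ J.1 <= Num.max I.1 J.1.
  by rewrite !le_max !lexx orbT.
have [Im Jm] : Num.min I.2 J.2 <= I.2 /\ Num.min I.2 J.2 <= J.2.
  by rewrite !ge_min !lexx orbT.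
suff : (open_itv I `&` open_itv J) x by rewrite IJ0.
by split; apply/andP; split; rewrite /x; lra.
Qed.

Lemma sum_disjoint_subitv_le (N : nat) (T : pred nat) (u v : nat -> R) (l a b : R) :
  a <= b ->
  (forall i, (i < N)%N -> T i -> [/\ a <= u i, u i + l <= v i & v i <= b]) ->
  (forall i j, (i < N)%N -> (j < N)%N -> T i -> T j -> i <> j ->
     v i <= u j \/ v j <= u i) ->
  \sum_(0 <= i < N | T i) l <= b - a.
Proof.
elim: N T a b => [|N IH] T a b ab inab disj; first by rewrite big_geq // subr_ge0.
have inab' i : (i < N)%N -> T i -> [/\ a <= u i, u i + l <= v i & v i <= b].
  by move=> iN; apply: inab; rewrite ltnS ltnW.
have disj' i j : (i < N)%N -> (j < N)%N -> T i -> T j -> i <> j ->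
    v i <= u j \/ v j <= u i.
  by move=> iN jN; apply: disj; rewrite ltnS ltnW.
rewrite big_mkcond big_nat_recr //= -big_mkcond /=.
case: ifP => TN; last by rewrite addr0; apply: IH.
have [aN lenN Nb] := inab N (ltnSn N) TN.
rewrite (bigID (fun i => v i <= u N)) /=.
have left_of_N : \sum_(0 <= i < N | T i && (v i <= u N)) l <= u N - a.
  apply: IH => // [i iN /andP[Ti viN]|i j iN jN /andP[Ti _] /andP[Tj _]].
    by have [] := inab' i iN Ti.
  exact: disj'.
have right_of_N : \sum_(0 <= i < N | T i && ~~ (v i <= u N)) l <= b - v N.
  apply: IH => // [i iN /andP[Ti viN]|i j iN jN /andP[Ti _] /andP[Tj _]].
    have [ai li ib] := inab' i iN Ti; split => //.
    have iNe : i <> N by move=> e; move: iN; rewrite e ltnn.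
    by case: (disj i N (ltnW iN) (ltnSn N) Ti TN iNe) => // viN'; rewrite viN' in viN.
  exact: disj'.
lra.
Qed.

Lemma count_packing_at_scale (Phi : set (R * R)) (G : set R) (eps h : R)
    (P : nat -> option (R * R)) (k N : nat) (c : nat -> R) (T : pred nat) :
  unc_packing Phi G eps P -> 0 < h ->
  (forall x, G x -> exists2 j, (j < k)%N & `|x - c j| < 2 * h) ->
  (forall i, T i -> exists2 I, P i = Some I & h / 2 < I.2 - I.1 <= h) ->
  \sum_(0 <= i < N | T i) (1 : R) <= 12 * k%:R.
Proof.
move=> [Pitv Pdisj] h0 cover Tscale.
pose itv i := odflt (0, 0) (P i).
have Titv i : T i -> P i = Some (itv i) /\ h / 2 < (itv i).2 - (itv i).1 <= h.
  by move=> /Tscale [I PI hI]; rewrite /itv PI.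
have near_center i : exists j, T i ->
    (j < k)%N /\ c j - 3 * h <= (itv i).1 /\ (itv i).2 <= c j + 3 * h.
  have [Ti|] := boolP (T i); last by exists 0%N.
  have [PI /andP[hl lh]] := Titv i Ti.
  have [_ _ _ [x [/andP[x1 x2] Gx]]] := Pitv i _ PI.
  have [j jk /[!ltr_norml] /andP[xj1 xj2]] := cover x Gx.
  by exists j => _; split => //; split; lra.
have [s Hs] := choice near_center.
rewrite (@sum_nat_partition _ N 0 k T s) => [|i _ /Hs[]//].
apply: le_trans (_ : \sum_(0 <= j < k) (12 : R) <= _); last first.
  by rewrite sumr_const_nat subn0 mulr_natr.
apply: ler_sum => j _.
suff : h / 2 * \sum_(0 <= i < N | T i && (s i == j)) (1 : R) <= h / 2 * 12.
  by rewrite ler_pM2l // divr_gt0.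
rewrite mulr_sumr (_ : h / 2 * 12 = c j + 3 * h - (c j - 3 * h)); last by lra.
under eq_bigr do rewrite mulr1.
apply: (sum_disjoint_subitv_le (u := fun i => (itv i).1) (v := fun i => (itv i).2)).
- lra.
- move=> i _ /andP[Ti /eqP sij]; have [_ /andP[hl _]] := Titv i Ti.
  by have [_ []] := Hs i Ti; rewrite sij; split => //; lra.
- move=> i i' _ _ /andP[Ti _] /andP[Ti' _] ii'.
  have [Pi _] := Titv i Ti; have [Pi' _] := Titv i' Ti'.
  have [_ lti _ _] := Pitv i _ Pi; have [_ lti' _ _] := Pitv i' _ Pi'.
  exact: disjoint_open_itv_sep (Pdisj _ _ _ _ ii' Pi Pi').
Qed.

End counting_intervals.

Section dyadic_scales.
Variable R : realType.

Lemma near_geometric_lt (c x r : R) : `|x| < 1 -> 0 < r ->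
  \forall n \near \oo, c * x ^+ n < r.
Proof.
move=> x1 r0; apply: (cvgr_lt 0) r0.
by rewrite -(mulr0 c); apply: cvgMl_tmp; exact: cvg_expr.
Qed.

Lemma normr_half_lt1 : `|2^-1 : R| < 1.
Proof. by rewrite ger0_norm // invf_lt1 // ltr1n. Qed.

Lemma exists_dyadic_scale (r : R) : 0 < r <= 1 ->
  exists n, 2^-1 ^+ n.+1 < r <= 2^-1 ^+ n.
Proof.
move=> /andP[r0 r1].
have [N _ /(_ N (leqnn N)) HN] := near_geometric_lt 2^-1 normr_half_lt1 r0.
have ex_small : exists n, 2^-1 ^+ n.+1 < r by exists N; rewrite exprS.
have [m mr mmin] := ex_minnP ex_small.
exists m; rewrite mr /=.
case: m mr mmin => [|m] _ mmin; first by rewrite expr0.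
by rewrite leNgt; apply/negP => /mmin; rewrite ltnn.
Qed.

Lemma powR_half_lt1 (r : R) : 0 < r -> 2^-1 `^ r < 1.
Proof.
move=> r0; have : 2^-1 `^ r < 1 `^ r.
  by apply: gt0_ltr_powR; rewrite ?nnegrE ?invr_ge0 ?invf_lt1 ?ltr1n.
by rewrite powR1.
Qed.

Lemma powR_exprn (x c : R) (n : nat) : 0 <= x -> (x ^+ n) `^ c = (x `^ c) ^+ n.
Proof. by move=> x0; rewrite -!powR_mulrn ?powR_ge0 // -!powRrM mulrC. Qed.

Lemma sum_geometric_tail_le (x : R) (m M : nat) : 0 < x < 1 ->
  \sum_(m <= n < m + M) x ^+ n <= x ^+ m / (1 - x).
Proof.
move=> /andP[x0 x1]; rewrite geometric_partial_tail.
by apply: geometric_le_lim; rewrite ?exprn_ge0 ?ltW // ger0_norm ?ltW.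
Qed.

Lemma exists_packing_scales (Phi : set (R * R)) (G : set R) (n0 : nat)
    (P : nat -> option (R * R)) :
  unc_packing Phi G (2^-1 ^+ n0) P ->
  exists sc : nat -> nat, forall i I, P i = Some I ->
    (n0 <= sc i)%N /\ 2^-1 ^+ (sc i).+1 < I.2 - I.1 <= 2^-1 ^+ sc i.
Proof.
move=> [Pitv _].
have [q0 q1] : 0 <= 2^-1 :> R /\ 2^-1 <= 1 :> R by rewrite invr_ge0 invf_le1 ?ler1n.
have /choice [sc Hsc] : forall i, exists n, forall I, P i = Some I ->
    2^-1 ^+ n.+1 < I.2 - I.1 <= 2^-1 ^+ n.
  move=> i; case Pi: (P i) => [I|]; last by exists 0%N.
  have [_ ltI lenI _] := Pitv i I Pi.
  have [|n Hn] := @exists_dyadic_scale (I.2 - I.1); last by exists n => _ [<-].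
  by rewrite subr_gt0 ltI (le_trans lenI) // exprn_ile1.
exists sc => i I Pi; split; last exact: Hsc.
have [_ _ lenI _] := Pitv i I Pi; have /andP[ltI _] := Hsc i I Pi.
rewrite leqNgt; apply/negP => lt_n0.
have : 2^-1 ^+ n0 <= 2^-1 ^+ (sc i).+1 :> R by rewrite ler_wiXn2l.
by rewrite leNgt (lt_le_trans ltI lenI).
Qed.

End dyadic_scales.
Arguments normr_half_lt1 {R}.

Section separated_points.
Variable R : realType.

(* The points stay in [h, 1 - h] so that the hypothesis on Phi applies to the
   interval (p - h, p + h). *)
Definition separated (G : set R) (h : R) (k : nat) (p : nat -> R) :=
  (forall i, (i < k)%N -> G (p i) /\ h <= p i <= 1 - h) /\
  (forall i j, (i < k)%N -> (j < k)%N -> i <> j -> 2 * h <= `|p i - p j|).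

Lemma separated_extend G h k p x : separated G h k p -> G x -> h <= x <= 1 - h ->
  (forall j, (j < k)%N -> 2 * h <= `|x - p j|) ->
  separated G h k.+1 (fun i => if i == k then x else p i).
Proof.
move=> [sepG sepD] Gx hx far.
have lt_k i : (i < k.+1)%N -> i != k -> (i < k)%N.
  by move=> ik ne; rewrite ltn_neqAle ne -ltnS.
split => [i ik|i j ik jk ij]; first by case: eqVneq => [//|/(lt_k i ik)/sepG].
case: (eqVneq i k) => [ei|ni]; case: (eqVneq j k) => [ej|nj].
- by case: ij; rewrite ei ej.
- by apply: far; apply: lt_k.
- by rewrite distrC; apply: far; apply: lt_k.
- by apply: sepD => //; apply: lt_k.
Qed.

End separated_points.

Section centered_family.
Variables (R : realType) (Phi : set (R * R)) (C : R).
Hypothesis C_gt0 : 0 < C.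
Hypothesis Phi_centered : forall a b : R, 0 <= a -> a < b -> b <= 1 ->
  exists c d : R, [/\ Phi (c, d), c < (a + b) / 2 < d, a <= c /\ d <= b &
                      (b - a) / (d - c) <= C].

Lemma centered_subitv (x h : R) : 0 < h -> h <= x <= 1 - h ->
  exists I, [/\ Phi I, I.1 < x < I.2, x - h <= I.1 /\ I.2 <= x + h &
                2 * h / C <= I.2 - I.1].
Proof.
move=> h0 /andP[hx xh].
have [c [d [Phicd mid [lc ud] ratio]]] : exists c d : R, [/\ Phi (c, d),
    c < (x - h + (x + h)) / 2 < d, x - h <= c /\ d <= x + h &
    (x + h - (x - h)) / (d - c) <= C].
  by apply: Phi_centered; lra.
rewrite (_ : (x - h + (x + h)) / 2 = x) in mid; last by lra.
have cd : 0 < d - c by case/andP: mid => *; lra.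
exists (c, d); split => //=.
move: ratio; rewrite (_ : x + h - (x - h) = 2 * h); last by lra.
by rewrite ler_pdivrMr // => ratio; rewrite ler_pdivrMr // [X in _ <= X]mulrC.
Qed.

Lemma packing_of_separated (G : set R) (h e : R) (k : nat) (p : nat -> R) :
  0 < h -> 2 * h <= e -> separated G h k p ->
  exists2 Q, unc_packing Phi G e Q &
    forall i, (i < k)%N -> exists2 I, Q i = Some I & 2 * h / C <= I.2 - I.1.
Proof.
move=> h0 he [sepG sepD].
have /choice [D HD] : forall i, exists I, (i < k)%N -> [/\ Phi I, I.1 < p i < I.2,
    p i - h <= I.1 /\ I.2 <= p i + h & 2 * h / C <= I.2 - I.1].
  move=> i; case: (ltnP i k) => [ik|]; last by exists (0, 0).
  by have [I HI] := centered_subitv h0 (sepG i ik).2; exists I.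
have near_p i x : (i < k)%N -> open_itv (D i) x -> `|x - p i| < h.
  move=> ik /andP[x1 x2]; have [_ _ [l u] _] := HD i ik.
  by rewrite ltr_norml; apply/andP; split; lra.
exists (fun i => if (i < k)%N then Some (D i) else None); last first.
  by move=> i ik; rewrite ik; exists (D i) => //; have [] := HD i ik.
split => [i I|i j I J ij].
  case: ifP => // ik [<-]; have [PhiD /andP[l u] [l' u'] _] := HD i ik.
  split => //; [lra | lra | exists (p i); split; [exact/andP | exact: (sepG i ik).1]].
case: ifP => // ik [<-]; case: ifP => // jk [<-].
apply/seteqP; split => // x [xi xj].
have := sepD i j ik jk ij; rewrite leNgt => /negP; apply.
have := near_p i x ik xi; have := near_p j x jk xj => xj' xi'.
rewrite (_ : p i - p j = (x - p j) - (x - p i)); last by lra.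
by apply: le_lt_trans (ler_normB _ _) _; lra.
Qed.

Lemma separated_card_le (G : set R) (h e alpha L : R) (k : nat) (p : nat -> R) :
  0 < h -> 2 * h <= e -> 0 <= alpha -> (Peps Phi alpha e G <= L%:E)%E ->
  separated G h k p -> k%:R <= L / (2 * h / C) `^ alpha.
Proof.
move=> h0 he a0 PL sep.
have [Q Qpack Qlen] := packing_of_separated h0 he sep.
have hC : 0 < 2 * h / C by rewrite divr_gt0 // mulr_gt0.
rewrite ler_pdivlMr ?powR_gt0 // -lee_fin; apply: le_trans PL.
apply: le_trans (packing_sum_ge a0 (ltW hC) Qlen) _.
by apply: le_ereal_sup_tmp; exists (packing_sum alpha Q) => //; exists Q.
Qed.

Section scale_bounds.
Variables (G : set R) (h e alpha L : R).
Hypotheses (h_gt0 : 0 < h) (he : 2 * h <= e) (alpha_ge0 : 0 <= alpha).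
Hypothesis PepsG_le : (Peps Phi alpha e G <= L%:E)%E.

Lemma exists_maximal_separated : exists k p, [/\ separated G h k p,
  k%:R <= L / (2 * h / C) `^ alpha &
  forall x, G x -> h <= x <= 1 - h -> exists2 j, (j < k)%N & `|x - p j| < 2 * h].
Proof.
have card_le := separated_card_le h_gt0 he alpha_ge0 PepsG_le.
pose has_sep n := `[< exists p, separated G h n p >].
have has_sep0 : exists n, has_sep n.
  by exists 0%N; apply/asboolP; exists (fun=> 0); split.
have has_sep_ub n : has_sep n -> (n <= Num.trunc (L / (2 * h / C) `^ alpha))%N.
  move=> /asboolP [p /card_le nL]; rewrite -ltnS -(ltr_nat R).
  exact: le_lt_trans nL (truncnS_gt _).
have [k /asboolP [p sep] kmax] := ex_maxnP has_sep0 has_sep_ub.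
exists k, p; split => //; first exact: card_le sep.
move=> x Gx hx; have [//|not_near] := pselect (exists2 j, (j < k)%N & `|x - p j| < 2 * h).
have far j : (j < k)%N -> 2 * h <= `|x - p j|.
  by move=> jk; rewrite leNgt; apply/negP => near; apply: not_near; exists j.
suff : has_sep k.+1 by move/kmax; rewrite ltnn.
by apply/asboolP; exists (fun i => if i == k then x else p i); apply: separated_extend.
Qed.

Lemma exists_covering_centers : G `<=` [set x | 0 <= x <= 1] ->
  exists k c, k%:R <= L / (2 * h / C) `^ alpha + 2 /\
    forall x, G x -> exists2 j, (j < k)%N & `|x - c j| < 2 * h.
Proof.
move=> G01; have [k [p [_ kL near_p]]] := exists_maximal_separated.
exists k.+2, (fun j => if (j < k)%N then p j else if j == k then 0 else 1).
split; first by rewrite -addn2 natrD lerD.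
move=> x Gx; have /andP[x0 x1] := G01 x Gx.
have [xh|hx] := ltP x h.
  by exists k; rewrite ?ltnS ?leqnSn // ltnn eqxx subr0 ger0_norm //; lra.
have [hx'|xh'] := ltP (1 - h) x.
  exists k.+1; rewrite // ltnNge leqnSn /= (gtn_eqF (ltnSn k)).
  by rewrite ler0_norm; lra.
have [j jk xj] := near_p x Gx (introT andP (conj hx xh')).
by exists j; [rewrite ltnS ltnW // ltnW | rewrite jk].
Qed.

Lemma count_packing_le (Phi' : set (R * R)) (eps : R) (P : nat -> option (R * R))
    (N : nat) (T : pred nat) :
  G `<=` [set x | 0 <= x <= 1] -> unc_packing Phi' G eps P ->
  (forall i, T i -> exists2 I, P i = Some I & h / 2 < I.2 - I.1 <= h) ->
  \sum_(0 <= i < N | T i) (1 : R) <= 12 * (L / (2 * h / C) `^ alpha + 2).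
Proof.
move=> G01 Ppack Tscale; have [k [c [kL cover]]] := exists_covering_centers G01.
apply: le_trans (count_packing_at_scale N Ppack h_gt0 cover Tscale) _.
by rewrite ler_pM2l.
Qed.

Lemma scale_sum_le (Phi' : set (R * R)) (eps b : R) (P : nat -> option (R * R))
    (N : nat) (T : pred nat) :
  G `<=` [set x | 0 <= x <= 1] -> h <= 1 -> alpha < b -> unc_packing Phi' G eps P ->
  (forall i, T i -> exists2 I, P i = Some I & h / 2 < I.2 - I.1 <= h) ->
  \sum_(0 <= i < N | T i) len_pow b (P i) <=
    (12 * L / (2 / C) `^ alpha + 24) * h `^ (b - alpha).
Proof.
move=> G01 h1 ab Ppack Tscale.
have b0 : 0 <= b by apply: le_trans (ltW ab).
apply: le_trans (_ : \sum_(0 <= i < N | T i) h `^ b * 1 <= _).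
  apply: ler_sum => i /Tscale [I -> /andP[hI Ih]] /=; rewrite mulr1.
  by apply: ge0_ler_powR; rewrite // nnegrE; lra.
rewrite -mulr_sumr.
apply: le_trans (ler_wpM2l (powR_ge0 _ _) (count_packing_le N G01 Ppack Tscale)) _.
set K := (2 / C) `^ alpha; set Y := h `^ alpha; set Z := h `^ (b - alpha).
have K0 : 0 < K by rewrite powR_gt0 // divr_gt0.
have Y0 : 0 < Y by rewrite powR_gt0.
have Y1 : Y <= 1 by rewrite -(powRr0 h) /Y ger_powR // h_gt0.
have hbZY : h `^ b = Z * Y.
  by rewrite /Z powRB ?gt_eqF ?implybT // divfK // gt_eqF.
rewrite hbZY (mulrAC 2 h) powRM ?divr_ge0 ?(ltW C_gt0) ?(ltW h_gt0) // -/K -/Y.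
rewrite (_ : Z * Y * _ = 12 * L / K * Z + 24 * (Z * Y)); last first.
  by field; rewrite !gt_eqF.
by rewrite (mulrDl (12 * L / K)) lerD2l ler_pM2l // ler_piMr // /Z powR_ge0.
Qed.

End scale_bounds.

Lemma packing_partial_sum_le (Phi' : set (R * R)) (G : set R) (e alpha b L : R)
    (P : nat -> option (R * R)) (n0 N : nat) :
  G `<=` [set x | 0 <= x <= 1] -> 0 <= alpha -> alpha < b ->
  (Peps Phi alpha e G <= L%:E)%E -> 2 * 2^-1 ^+ n0 <= e ->
  unc_packing Phi' G (2^-1 ^+ n0) P ->
  \sum_(0 <= i < N) len_pow b (P i) <=
    (12 * L / (2 / C) `^ alpha + 24) * (2^-1 `^ (b - alpha)) ^+ n0
    / (1 - 2^-1 `^ (b - alpha)).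
Proof.
move=> G01 a0 ab PL small Ppack; have [sc Hsc] := exists_packing_scales Ppack.
set q : R := 2^-1; set rho := q `^ (b - alpha); set A := _ + 24.
have q0 : 0 < q by rewrite invr_gt0.
have q1 : q < 1 by rewrite invf_lt1 // ltr1n.
set M := (\max_(i < N) sc i).+1.
rewrite (bigID (fun i => isSome (P i))) /= [X in _ + X]big1 ?addr0 => [|i]; last first.
  by case: (P i).
rewrite (@sum_nat_partition _ N n0 (n0 + M) _ sc) => [|i iN]; last first.
  case Pi: (P i) => [I|] // _; rewrite (Hsc i I Pi).1 ltn_addl // ltnS.
  exact: (@leq_bigmax _ (fun j : 'I_N => sc j) (Ordinal iN)).
have L0 : 0 <= L by rewrite -lee_fin (le_trans (Peps_ge0 _ _ _ _) PL).
have A0 : 0 <= A by rewrite addr_ge0 // mulr_ge0 ?mulr_ge0 ?invr_ge0 ?powR_ge0.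
apply: le_trans (_ : \sum_(n0 <= n < n0 + M) A * rho ^+ n <= _); last first.
  rewrite -mulr_sumr -mulrA ler_wpM2l // sum_geometric_tail_le //.
  by rewrite powR_gt0 // powR_half_lt1 // subr_gt0.
apply: ler_sum_nat => n /andP[n0n _].
rewrite /rho -powR_exprn ?(ltW q0) //.
apply: (scale_sum_le (e := e) _ _ a0 PL N G01 _ ab Ppack).
- by rewrite exprn_gt0.
- by apply: le_trans small; rewrite ler_pM2l // ler_wiXn2l // ltW.
- by rewrite exprn_ile1 // ltW.
- move=> i /andP[]; case Pi: (P i) => [I|] // _ /eqP sci.
  by exists I => //; have [_] := Hsc i I Pi; rewrite sci exprSr.
Qed.

Lemma P0_all_itvs_eq0 (G : set R) (a b : R) : G `<=` [set x | 0 <= x <= 1] ->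
  0 <= a -> a < b -> (P0 Phi a G < +oo)%E -> P0 all_itvs b G = 0%E.
Proof.
move=> G01 a0 ab P0fin.
have [e e0 Pefin] : exists2 e, 0 < e & (Peps Phi a e G < +oo)%E.
  by move: P0fin; rewrite P0_infE => /ereal_inf_lt [_ [e e0 <-] lt]; exists e.
set L := fine (Peps Phi a e G).
have PL : (Peps Phi a e G <= L%:E)%E by rewrite /L fineK // ge0_fin_numE // Peps_ge0.
set rho : R := 2^-1 `^ (b - a); set A := 12 * L / (2 / C) `^ a + 24.
have rho1 : `|rho| < 1 by rewrite ger0_norm ?powR_ge0 // powR_half_lt1 // subr_gt0.
apply/eqP; rewrite eq_le P0_ge0 andbT; apply/lee_addgt0Pr => eta eta0; rewrite add0e.
have [n0 _ /(_ n0 (leqnn n0)) [small tail]] : \forall n \near \oo,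
    2 * 2^-1 ^+ n <= e /\ A / (1 - rho) * rho ^+ n <= eta.
  near=> n; split; near: n.
  - by apply: filterS (near_geometric_lt 2 normr_half_lt1 e0) => n /ltW.
  - by apply: filterS (near_geometric_lt (A / (1 - rho)) rho1 eta0) => n /ltW.
rewrite P0_infE; apply: ge_ereal_inf; exists (Peps all_itvs b (2^-1 ^+ n0) G).
  by exists (2^-1 ^+ n0) => //; rewrite /= exprn_gt0.
apply/ereal_supP => _ [P Ppack <-]; rewrite packing_sumE.
apply: lime_le; first by apply: is_cvg_nneseries => *; rewrite lee_fin len_pow_ge0.
apply: nearW => N; rewrite sumEFin lee_fin; apply: le_trans tail.
rewrite mulrAC; exact: packing_partial_sum_le G01 a0 ab PL small Ppack.
Unshelve. all: by end_near. Qed.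

Lemma Pmeas_all_itvs_eq0 (E : set R) (a b : R) : E `<=` [set x | 0 <= x <= 1] ->
  0 <= a -> a < b -> Pmeas Phi a E = 0%E -> Pmeas all_itvs b E = 0%E.
Proof.
move=> E01 a0 ab PE; apply/eqP; rewrite eq_le Pmeas_ge0 andbT.
have : (Pmeas Phi a E < 1)%E by rewrite PE.
move=> /ereal_inf_lt [_ [F EF <-] Flt].
have P0fin j : (P0 Phi a (F j) < +oo)%E.
  rewrite (nneseriesD1 (n := j)) // in Flt; last by move=> *; exact: P0_ge0.
  apply: le_lt_trans (lt_trans Flt (ltry 1)); rewrite leeDl //.
  by apply: nneseries_ge0 => *; exact: P0_ge0.
pose F01 j := F j `&` [set x | 0 <= x <= 1].
apply: ge_ereal_inf; exists (\sum_(0 <= j <oo) P0 all_itvs b (F01 j))%E.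
  exists F01 => // x Ex; have [j _ Fjx] := EF x Ex.
  by exists j => //; split => //; exact: E01.
rewrite eseries0 // => j _ _; apply: (P0_all_itvs_eq0 (a := a)) => //; first by move=> x [].
by apply: le_lt_trans _ (P0fin j); apply: le_P0 => // x [].
Qed.

End centered_family.

Theorem theorem5 (R : realType) (Phi : set (R * R)) (C : R) :
  0 < C ->
  (forall I, Phi I -> 0 <= I.1 /\ I.1 < I.2 /\ I.2 <= 1) ->
  (forall a b : R, 0 <= a -> a < b -> b <= 1 ->
     exists c d : R, [/\ Phi (c, d),
       c < (a + b) / 2 < d,
       a <= c /\ d <= b &
       (b - a) / (d - c) <= C]) ->
  forall E : set R, E `<=` [set x | 0 <= x <= 1] ->
  dimP Phi E = dimP_unc E.
Proof.
(* The intervals of Phi need not lie in [0, 1]. *)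
move=> C0 _ Phi_centered E E01; apply/eqP; rewrite eq_le; apply/andP; split.
  exact/le_dimP_family/subsetT.
apply: (le_dimP_of_Pmeas_eq0 (Phi' := all_itvs)) => a b a0 ab.
exact: (Pmeas_all_itvs_eq0 C0 Phi_centered E01 a0 ab).
Qed.
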